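(* Let $\mathcal{R}$ be an MSR system satisfying the protocol format assumptions of the context, let $\mathcal{R}_{\mathsf{intf}}$ be its interface model, and let $\mathcal{R}^{\mathsf{role}}_i$ and $\mathcal{R}^e_{\mathsf{env}}$ be the role and environment components obtained by splitting the I/O rules (as in the context). For a fresh name $\mathit{rid}$, let $\mathcal{R}^{\mathsf{role}}_i(\mathit{rid})$ be $\mathcal{R}^{\mathsf{role}}_i$ with the thread identifier fixed to $\mathit{rid}$. Let $\Lambda = \bigcup_i\{a\theta \mid \exists l,r.\ l\xrightarrow{a} r\in\mathcal{R}^i_{\mathsf{io}},\ \mathrm{range}(\theta)\subseteq\mathcal{M}\}$ be the set of all ground instances of synchronization labels. Then $$\mathrm{Tr}\Big(\big(|||_{i,\mathit{rid}}\ \mathcal{R}^{\mathsf{role}}_i(\mathit{rid})\big)\ \|_{\Lambda}\ \mathcal{R}^e_{\mathsf{env}}\Big)\subseteq \mathrm{Tr}(\mathcal{R}_{\mathsf{intf}}).$$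
   Context: Terms and messages. Fix a finite signature $\Sigma$ of function symbols, a set of names $\mathcal{N} = \mathit{fresh} \cup \mathit{pub}$ and a set of variables $\mathcal{V}$; terms are $\mathcal{T} = \mathcal{T}_\Sigma(\mathcal{N}\cup\mathcal{V})$, messages $\mathcal{M}$ are ground terms, and an equational theory $\mathsf{E}$ induces $=_\mathsf{E}$. Facts and MSR. A fact signature $\Sigma_{\mathsf{facts}} = \Sigma_{\mathsf{lin}} \uplus \Sigma_{\mathsf{per}}$ is partitioned into linear and persistent symbols; facts $F(t_1,\dots,t_k)$ are partitioned accordingly into $\mathcal{F}_{\mathsf{lin}}\uplus\mathcal{F}_{\mathsf{per}}$. An MSR rule $l \xrightarrow{a} r$ has multisets of facts $l,a,r$. An MSR system induces an LTS whose states are multisets of ground facts, initial state empty, with transition $S \xrightarrow{a'} (S \setminus^{\#} (l' \cap^{\#} \mathcal{F}_{\mathsf{lin}})) \cup^{\#} r'$ whenever $l \xrightarrow{a} r$ is a rule, $\theta$ a ground instantiation of its variables, $l' \xrightarrow{a'} r' =_\mathsf{E} (l\xrightarrow{a} r)\theta$, $l' \cap^{\#} \mathcal{F}_{\mathsf{lin}} \subseteq^{\#} S$ and $\mathrm{set}(l') \cap \mathcal{F}_{\mathsf{per}} \subseteq \mathrm{set}(S)$ (multiset operations). For an LTS $X$, $\mathrm{Tr}(X)$ is the set of label sequences of finite executions from the initial state. Reserved symbols: $\mathsf{K}\in\Sigma_{\mathsf{per}}$ and $\mathsf{Fr},\mathsf{in},\mathsf{out}\in\Sigma_{\mathsf{lin}}$.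 Format assumptions. $\Sigma_{\mathsf{facts}} = \Sigma_{\mathsf{act}} \uplus \Sigma_{\mathsf{env}} \uplus \biguplus_{1\le i\le n} \Sigma^i_{\mathsf{state}}$. $\Sigma_{\mathsf{env}}$ contains disjoint subsets $\Sigma_{\mathsf{in}},\Sigma_{\mathsf{out}}$ with $\mathsf{Fr},\mathsf{in}\in\Sigma_{\mathsf{in}}$, $\mathsf{out}\in\Sigma_{\mathsf{out}}$, $\mathsf{K}\in\Sigma_{\mathsf{env}}\setminus(\Sigma_{\mathsf{in}}\cup\Sigma_{\mathsf{out}})$, and a setup symbol $\mathsf{Setup}_i\in\Sigma_{\mathsf{in}}$ for each role $i$. $\mathcal{R} = \mathcal{R}_{\mathsf{env}} \uplus \biguplus_{i}\mathcal{R}_i$, where $\mathcal{R}_{\mathsf{env}}$ contains the attacker message deduction rules and the freshness rule. All rule labels use only symbols of $\Sigma_{\mathsf{act}}$. Rules of $\mathcal{R}_{\mathsf{env}}$ use only $\Sigma_{\mathsf{env}}$ symbols in premises and conclusions; a rule producing $\mathsf{Setup}_i$ lies in $\mathcal{R}_{\mathsf{env}}$, produces nothing else and has empty label (a role setup rule). Each rule $l\xrightarrow{a} r\in\mathcal{R}_i$ has premise symbols in $\Sigma^i_{\mathsf{state}}\cup\Sigma_{\mathsf{in}}$, conclusion symbols in $\Sigma^i_{\mathsf{state}}\cup\Sigma_{\mathsf{out}}$, at least one state fact in $r$, and for some $k_i\ge1$ the first $k_i$ arguments of all its state and $\mathsf{Setup}_i$ facts coincide, the first one being a thread identifier $\mathit{rid}$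 of fresh type. Interface model. $\Sigma_{\mathsf{in}}^- = \Sigma_{\mathsf{in}}\setminus\{\mathsf{Setup}_i\}_i$. For $F\in\Sigma^-_{\mathsf{in}}\cup\Sigma_{\mathsf{out}}$ and role $i$ add a buffer symbol $F_i$; let $\Sigma^i_{\mathsf{role}} = \Sigma^i_{\mathsf{state}}\cup\{F_i\}$. $\mathcal{R}'_i$ replaces in rules of $\mathcal{R}_i$ each $F(\bar t)$ with $F\in\Sigma^-_{\mathsf{in}}\cup\Sigma_{\mathsf{out}}$ by $F_i(\mathit{rid},\bar t)$. $\mathcal{R}_{\mathsf{io}}$ contains, for each role $i$, $[F(\bar x)]\xrightarrow{[]}[F_i(\mathit{rid},\bar x)]$ for $F\in\Sigma^-_{\mathsf{in}}$, $[G_i(\mathit{rid},\bar x)]\xrightarrow{[]}[G(\bar x)]$ for $G\in\Sigma_{\mathsf{out}}$, and the role setup rules (removed from $\mathcal{R}_{\mathsf{env}}$, leaving $\mathcal{R}^-_{\mathsf{env}}$). $\mathcal{R}_{\mathsf{intf}} = \mathcal{R}^-_{\mathsf{env}}\uplus\mathcal{R}_{\mathsf{io}}\uplus\biguplus_i\mathcal{R}'_i$. Decomposition. Each I/O rule $\rho$ of role $i$ with variables $\bar y$ (including $\mathit{rid}$) gets a fresh action symbol $\lambda_\rho$ (the synchronization label $\lambda_\rho(\bar y)$), and is split into a role part (in $\mathcal{R}^i_{\mathsf{io}}$) and an environment part (in $\mathcal{R}^e_{\mathsf{io}}$): for the input rule of $F$, role part $[]\xrightarrow{[\lambda_\rho(\bar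 y)]}[F_i(\mathit{rid},\bar x)]$ and environment part $[F(\bar x)]\xrightarrow{[\lambda_\rho(\bar y)]}[]$; for the output rule of $G$, role part $[G_i(\mathit{rid},\bar x)]\xrightarrow{[\lambda_\rho(\bar y)]}[]$ and environment part $[]\xrightarrow{[\lambda_\rho(\bar y)]}[G(\bar x)]$; for a setup rule $l\xrightarrow{[]}[\mathsf{Setup}_i(\bar u)]$, role part $[]\xrightarrow{[\lambda_\rho(\bar y)]}[\mathsf{Setup}_i(\bar u)]$ and environment part $l\xrightarrow{[\lambda_\rho(\bar y)]}[]$. Then $\mathcal{R}^{\mathsf{role}}_i = \mathcal{R}'_i\uplus\mathcal{R}^i_{\mathsf{io}}$ and $\mathcal{R}^e_{\mathsf{env}} = \mathcal{R}^-_{\mathsf{env}}\uplus\mathcal{R}^e_{\mathsf{io}}$. Compositions. $|||_{i,\mathit{rid}} X_{i,\mathit{rid}}$ has as states functions $f$ mapping each $(i,\mathit{rid})$ to a state of $X_{i,\mathit{rid}}$, initial state the pointwise initial states, and transitions $f\xrightarrow{a} f[(i,\mathit{rid})\mapsto S']$ whenever $f(i,\mathit{rid})\xrightarrow{a}S'$ in $X_{i,\mathit{rid}}$. $X_1\|_\Lambda X_2$ has states $(S_1,S_2)$ and transitions $(S_1,S_2)\xrightarrow{a}(S_1',S_2')$ if either (i) $a=[]$ and for some $a'$ with $a'=_\mathsf{E}b$ for some $b\in\Lambda$, $S_1\xrightarrow{a'}S_1'$ and $S_2\xrightarrow{a'}S_2'$; or (ii) $a$ is not $\mathsf{E}$-equal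 to an element of $\Lambda$, $S_1\xrightarrow{a}S_1'$ and $S_2'=S_2$; or (iii) $a$ is not $\mathsf{E}$-equal to an element of $\Lambda$, $S_2\xrightarrow{a}S_2'$ and $S_1'=S_1$. *)

From Stdlib Require Import List Permutation Arith Bool.
Import ListNotations.
Set Implicit Arguments.

Inductive vsort := SFresh | SPub | SMsg.
Definition var : Type := (vsort * nat)%type.
Definition var_eq_dec : forall x y : var, {x = y} + {x <> y}.
Proof. decide equality; [apply Nat.eq_dec | decide equality]. Defined.

Section Terms.
Variables (Fun Nm : Type).

Inductive term : Type :=
| TVar (v : var)
| TName (n : Nm)
| TApp (f : Fun) (ts : list term).

Fixpoint tsubst (s : var -> term) (t : term) : term :=
  match t with
  | TVar v => s v
  | TName n => TName n
  | TApp f ts => TApp f (map (tsubst s) ts)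
  end.

Fixpoint tvars (t : term) : list var :=
  match t with
  | TVar v => [v]
  | TName _ => []
  | TApp _ ts => flat_map tvars ts
  end.

Definition ground (t : term) : Prop := tvars t = [].

Inductive eqE (E : term -> term -> Prop) : term -> term -> Prop :=
| eqE_ax l r (s : var -> term) : E l r -> eqE E (tsubst s l) (tsubst s r)
| eqE_refl t : eqE E t t
| eqE_sym t u : eqE E t u -> eqE E u t
| eqE_trans t u w : eqE E t u -> eqE E u w -> eqE E t w
| eqE_cong f ts us : Forall2 (eqE E) ts us -> eqE E (TApp f ts) (TApp f us).

Record fact (X : Type) := mkfact { fsym : X; fargs : list term }.
Record rule (X : Type) :=
  mkrule { prem : list (fact X); lab : list (fact X); concl : list (fact X) }.

Definition fsubst X (s : var -> term) (f : fact X) : fact X :=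
  mkfact (fsym f) (map (tsubst s) (fargs f)).
Definition rsubst X (s : var -> term) (r : rule X) : rule X :=
  mkrule (map (fsubst s) (prem r)) (map (fsubst s) (lab r)) (map (fsubst s) (concl r)).
Definition fvars X (f : fact X) : list var := flat_map tvars (fargs f).
Definition rule_vars X (r : rule X) : list var :=
  nodup var_eq_dec (flat_map (@fvars X) (prem r ++ lab r ++ concl r)).
Definition fground X (f : fact X) : Prop := Forall ground (fargs f).
Definition ground_inst (s : var -> term) : Prop := forall v, ground (s v).

Definition feqE E X (f g : fact X) : Prop :=
  fsym f = fsym g /\ Forall2 (eqE E) (fargs f) (fargs g).
Definition meqE E X (a b : list (fact X)) : Prop :=
  exists a2, Permutation a a2 /\ Forall2 (fun f g => feqE E f g) a2 b.

End Terms.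
Arguments TVar {Fun Nm} v.
Arguments TName {Fun Nm} n.
Arguments TApp {Fun Nm} f ts.
Arguments mkfact {Fun Nm X} fsym fargs.
Arguments mkrule {Fun Nm X} prem lab concl.

Record lts (L : Type) := mklts {
  lst : Type;
  linit : lst;
  lstep : lst -> L -> lst -> Prop }.

Inductive exec (L : Type) (X : lts L) : list L -> lst X -> Prop :=
| exec_nil : exec X [] (linit X)
| exec_snoc tr s a s' : exec X tr s -> lstep X s a s' -> exec X (tr ++ [a]) s'.

Definition Tr (L : Type) (X : lts L) (tr : list L) : Prop := exists s, exec X tr s.

Definition interleave (I L : Type) (P : I -> Prop) (Xs : I -> lts L) : lts L :=
  {| lst := forall j : I, lst (Xs j);
     linit := fun j => linit (Xs j);
     lstep := fun f a f' =>
       exists j, P j /\ lstep (Xs j) (f j) a (f' j) /\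
                 (forall k, k <> j -> f' k = f k) |}.

(* Synchronous composition X1 ||_Lam X2; [LamE a] means "a is E-equal to
   some element of Lambda"; [nil] is the empty label. *)
Definition par (L : Type) (LamE : L -> Prop) (emp : L) (X1 X2 : lts L) : lts L :=
  {| lst := (lst X1 * lst X2)%type;
     linit := (linit X1, linit X2);
     lstep := fun s a s' =>
       (a = emp /\ exists a', LamE a' /\ lstep X1 (fst s) a' (fst s') /\
                              lstep X2 (snd s) a' (snd s'))
       \/ (~ LamE a /\ lstep X1 (fst s) a (fst s') /\ snd s' = snd s)
       \/ (~ LamE a /\ lstep X2 (snd s) a (snd s') /\ fst s' = fst s) |}.

(* MSR semantics.  States: multisets of ground facts, represented as
   lists (all constructions are invariant under permutation). *)
Section MSR.
Variables (Fun Nm X : Type) (E : term Fun Nm -> term Fun Nm -> Prop)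
          (pers : X -> bool) (Rs : rule Fun Nm X -> Prop).

Definition msr_step (S : list (fact Fun Nm X)) (a' : list (fact Fun Nm X))
                    (S' : list (fact Fun Nm X)) : Prop :=
  exists (r : rule Fun Nm X) (th : var -> term Fun Nm) l' r',
    Rs r /\ ground_inst th /\
    Forall (@fground _ _ _) l' /\ Forall (@fground _ _ _) a' /\
    Forall (@fground _ _ _) r' /\
    Forall2 (fun f g => feqE E f g) l' (map (fsubst th) (prem r)) /\
    Forall2 (fun f g => feqE E f g) a' (map (fsubst th) (lab r)) /\
    Forall2 (fun f g => feqE E f g) r' (map (fsubst th) (concl r)) /\
    (exists rest, Permutation S (filter (fun f => negb (pers (fsym f))) l' ++ rest) /\
                  Permutation S' (rest ++ r')) /\
    (forall f, In f l' -> pers (fsym f) = true -> In f S).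

Definition msr_lts : lts (list (fact Fun Nm X)) :=
  {| lst := list (fact Fun Nm X); linit := []; lstep := msr_step |}.

End MSR.

Inductive fkind := KAct | KEnv | KState (i : nat).

Record Sig := {
  Fun : Type;
  Nm : Type;
  nfresh : Nm -> bool;               (* true: fresh name, false: public *)
  Eqs : term Fun Nm -> term Fun Nm -> Prop;
  FS : Type;
  farity : FS -> nat;
  persistent : FS -> bool;
  kind : FS -> fkind;
  is_in : FS -> bool;
  is_out : FS -> bool;
  fK : FS; fFr : FS; fIn : FS; fOut : FS;
  fSetup : nat -> FS;
  nroles : nat                       (* roles are i = 0 .. nroles-1 *)
}.

Section Model.
Variable Sg : Sig.

Definition bterm := term (Fun Sg) (Nm Sg).
Definition bfact := fact (Fun Sg) (Nm Sg) (FS Sg).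
Definition brule := rule (Fun Sg) (Nm Sg) (FS Sg).

(* Synchronisation-label identifiers (one per I/O rule rho) *)
Inductive syncid :=
| SIn (i : nat) (F : FS Sg)
| SOut (i : nat) (G : FS Sg)
| SSet (i : nat) (r : brule).

(* Extended fact symbols: original ones, buffers F_i, lambda_rho *)
Inductive xsym :=
| XBase (F : FS Sg)
| XBuf (F : FS Sg) (i : nat)
| XSync (s : syncid).

Definition xpers (x : xsym) : bool :=
  match x with XBase F => persistent Sg F | XBuf F _ => persistent Sg F | XSync _ => false end.

Definition xfact := fact (Fun Sg) (Nm Sg) xsym.
Definition xrule := rule (Fun Sg) (Nm Sg) xsym.

Definition lift (f : bfact) : xfact := mkfact (XBase (fsym f)) (fargs f).
Definition lift_rule (r : brule) : xrule :=
  mkrule (map lift (prem r)) (map lift (lab r)) (map lift (concl r)).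

Definition prefix (pre l : list bterm) : Prop := exists suf, l = pre ++ suf.

Definition in_minus (F : FS Sg) : Prop :=
  is_in Sg F = true /\ forall i, i < nroles Sg -> F <> fSetup Sg i.
Definition buffered (F : FS Sg) : Prop := in_minus F \/ is_out Sg F = true.

Definition state_or_setup (i : nat) (F : FS Sg) : Prop :=
  kind Sg F = KState i \/ F = fSetup Sg i.

(* v is the thread identifier (rid) variable of rule r of role i *)
Definition rid_of (i : nat) (r : brule) (v : var) : Prop :=
  fst v = SFresh /\
  exists pre : list bterm, hd_error pre = Some (TVar v) /\
    forall f, In f (prem r ++ concl r) -> state_or_setup i (fsym f) -> prefix pre (fargs f).

Definition produces_setup (i : nat) (r : brule) : Prop :=
  exists f, In f (concl r) /\ fsym f = fSetup Sg i.

Definition facts_of (r : brule) : list bfact := prem r ++ lab r ++ concl r.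

Definition format (R_env : brule -> Prop) (R_role : nat -> brule -> Prop) : Prop :=
  (forall F i, kind Sg F = KState i -> i < nroles Sg) /\
  (forall F, is_in Sg F = true -> kind Sg F = KEnv) /\
  (forall F, is_out Sg F = true -> kind Sg F = KEnv) /\
  (forall F, ~ (is_in Sg F = true /\ is_out Sg F = true)) /\
  persistent Sg (fK Sg) = true /\ persistent Sg (fFr Sg) = false /\
  persistent Sg (fIn Sg) = false /\ persistent Sg (fOut Sg) = false /\
  is_in Sg (fFr Sg) = true /\ is_in Sg (fIn Sg) = true /\ is_out Sg (fOut Sg) = true /\
  kind Sg (fK Sg) = KEnv /\ is_in Sg (fK Sg) = false /\ is_out Sg (fK Sg) = false /\
  (forall i, i < nroles Sg -> is_in Sg (fSetup Sg i) = true) /\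
  (forall i j, i < nroles Sg -> j < nroles Sg -> fSetup Sg i = fSetup Sg j -> i = j) /\
  (forall r f, (R_env r \/ exists i, i < nroles Sg /\ R_role i r) ->
      In f (facts_of r) -> length (fargs f) = farity Sg (fsym f)) /\
  (exists x, fst x = SFresh /\
     R_env (mkrule [] [] [mkfact (fFr Sg) [TVar x]])) /\
  (forall r f, (R_env r \/ exists i, i < nroles Sg /\ R_role i r) ->
      In f (lab r) -> kind Sg (fsym f) = KAct) /\
  (forall r f, R_env r -> In f (prem r ++ concl r) -> kind Sg (fsym f) = KEnv) /\
  (forall r i, R_env r -> i < nroles Sg -> produces_setup i r ->
      lab r = [] /\ exists v u, fst v = SFresh /\
        concl r = [mkfact (fSetup Sg i) (TVar v :: u)]) /\
  (forall i, i < nroles Sg -> exists k, 1 <= k /\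
     forall r, R_role i r ->
       (forall f, In f (prem r) -> kind Sg (fsym f) = KState i \/ is_in Sg (fsym f) = true) /\
       (forall f, In f (concl r) -> kind Sg (fsym f) = KState i \/ is_out Sg (fsym f) = true) /\
       (exists f, In f (concl r) /\ kind Sg (fsym f) = KState i) /\
       (exists (pre : list bterm) v, length pre = k /\ hd_error pre = Some (TVar v) /\
          fst v = SFresh /\
          forall f, In f (prem r ++ concl r) -> state_or_setup i (fsym f) ->
            prefix pre (fargs f))).

Definition ridv : var := (SFresh, 0).
Definition xsv (k : nat) : list var := map (fun j => (SMsg, Datatypes.S j)) (seq 0 k).
Definition xs (k : nat) : list bterm := map TVar (xsv k).
Definition rid_t : bterm := TVar ridv.

Definition xform (i : nat) (v : var) (f : bfact) (g : xfact) : Prop :=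
  (buffered (fsym f) /\ g = mkfact (XBuf (fsym f) i) (TVar v :: fargs f)) \/
  (~ buffered (fsym f) /\ g = lift f).

Section Roles.
Variables (R_env : brule -> Prop) (R_role : nat -> brule -> Prop).

Definition R_env_minus (r : brule) : Prop :=
  R_env r /\ ~ (exists i, i < nroles Sg /\ produces_setup i r).

Definition setup_rule (i : nat) (r : brule) : Prop :=
  i < nroles Sg /\ R_env r /\ produces_setup i r.

(* R'_i, each rule together with its thread-identifier variable *)
Definition R'_role (i : nat) (rv : xrule * var) : Prop :=
  exists r, R_role i r /\ rid_of i r (snd rv) /\
    Forall2 (xform i (snd rv)) (prem r) (prem (fst rv)) /\
    lab (fst rv) = map lift (lab r) /\
    Forall2 (xform i (snd rv)) (concl r) (concl (fst rv)).

Definition in_rule (i : nat) (F : FS Sg) : xrule :=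
  mkrule [mkfact (XBase F) (xs (farity Sg F))] []
         [mkfact (XBuf F i) (rid_t :: xs (farity Sg F))].
Definition out_rule (i : nat) (G : FS Sg) : xrule :=
  mkrule [mkfact (XBuf G i) (rid_t :: xs (farity Sg G))] []
         [mkfact (XBase G) (xs (farity Sg G))].

Definition R_io (r : xrule) : Prop :=
  exists i, i < nroles Sg /\
   ((exists F, in_minus F /\ r = in_rule i F) \/
    (exists G, is_out Sg G = true /\ r = out_rule i G) \/
    (exists r0, setup_rule i r0 /\ r = lift_rule r0)).

Definition R_intf (r : xrule) : Prop :=
  (exists r0, R_env_minus r0 /\ r = lift_rule r0) \/ R_io r \/
  (exists i v, i < nroles Sg /\ R'_role i (r, v)).

Definition lamIn (i : nat) (F : FS Sg) : xfact :=
  mkfact (XSync (SIn i F)) (rid_t :: xs (farity Sg F)).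
Definition lamOut (i : nat) (G : FS Sg) : xfact :=
  mkfact (XSync (SOut i G)) (rid_t :: xs (farity Sg G)).
Definition lamSet (i : nat) (r0 : brule) : xfact :=
  mkfact (XSync (SSet i r0)) (map TVar (rule_vars r0)).

Definition R_io_role (i : nat) (rv : xrule * var) : Prop :=
  i < nroles Sg /\
  ((exists F, in_minus F /\ snd rv = ridv /\
      fst rv = mkrule [] [lamIn i F] [mkfact (XBuf F i) (rid_t :: xs (farity Sg F))]) \/
   (exists G, is_out Sg G = true /\ snd rv = ridv /\
      fst rv = mkrule [mkfact (XBuf G i) (rid_t :: xs (farity Sg G))] [lamOut i G] []) \/
   (exists r0 u, setup_rule i r0 /\
      concl r0 = [mkfact (fSetup Sg i) (TVar (snd rv) :: u)] /\
      fst rv = mkrule [] [lamSet i r0] (map lift (concl r0)))).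

Definition R_io_env (r : xrule) : Prop :=
  exists i, i < nroles Sg /\
  ((exists F, in_minus F /\
      r = mkrule [mkfact (XBase F) (xs (farity Sg F))] [lamIn i F] []) \/
   (exists G, is_out Sg G = true /\
      r = mkrule [] [lamOut i G] [mkfact (XBase G) (xs (farity Sg G))]) \/
   (exists r0, setup_rule i r0 /\
      r = mkrule (map lift (prem r0)) [lamSet i r0] [])).

Definition R_role_full (i : nat) (rv : xrule * var) : Prop :=
  R'_role i rv \/ R_io_role i rv.

Definition R_role_rid (i : nat) (n : Nm Sg) (r : xrule) : Prop :=
  exists r0 v, R_role_full i (r0, v) /\
    r = rsubst (fun w => if var_eq_dec w v then TName n else TVar w) r0.

Definition R_env_e (r : xrule) : Prop :=
  (exists r0, R_env_minus r0 /\ r = lift_rule r0) \/ R_io_env r.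

Definition Lambda (a : list xfact) : Prop :=
  exists i rv th, R_io_role i rv /\ ground_inst th /\
    a = map (fsubst th) (lab (fst rv)).

Definition LambdaE (a : list xfact) : Prop :=
  exists b, Lambda b /\ meqE (Eqs Sg) a b.

Definition mlts (Rs : xrule -> Prop) : lts (list xfact) :=
  msr_lts (Eqs Sg) xpers Rs.

Definition composed : lts (list xfact) :=
  par LambdaE []
      (interleave (fun p : nat * Nm Sg => fst p < nroles Sg /\ nfresh Sg (snd p) = true)
                  (fun p => mlts (R_role_rid (fst p) (snd p))))
      (mlts R_env_e).

Definition intf : lts (list xfact) := mlts R_intf.

End Roles.
End Model.

From Stdlib Require Import List Permutation Classical.
Import ListNotations.

(* The interface model simulates the composition step by step, with the same labels: a
   state of the composition corresponds to the multiset union of all thread states and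
   the environment state.  A thread or environment step whose label is not a
   synchronisation label uses a rule of R'_i or of R^-_env, which are rules of R_intf.
   A synchronised step pairs the role part and the environment part of one I/O rule
   (the synchronisation symbol determines the rule), and firing both parts at once is an
   instance of that I/O rule: the two instantiations agree modulo E because the
   synchronisation label exposes every variable of the role part. *)

Notation fsyms := (map (@fsym _ _ _)).

Lemma Forall2_trans {A} {R : A -> A -> Prop} {a b c : list A} :
  (forall x y z, R x y -> R y z -> R x z) ->
  Forall2 R a b -> Forall2 R b c -> Forall2 R a c.
Proof.
  intros HR Hab; revert c.
  induction Hab; intros c Hbc; inversion Hbc; subst; constructor; eauto.
Qed.

Lemma Forall2_map_sameP {A B C} {R : B -> C -> Prop} {f : A -> B} {g : A -> C} {l} :
  Forall2 R (map f l) (map g l) <-> forall x, In x l -> R (f x) (g x).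
Proof.
  induction l as [|y l IH]; simpl; split; intros H.
  - contradiction.
  - constructor.
  - inversion H; subst. intros x [<- | Hx]; [assumption | apply IH; auto].
  - constructor; [apply H; left; reflexivity | apply IH; auto].
Qed.

Section Flatten.
Context {I A : Type}.

(* [support] lists the possibly non-empty components; component indices (thread names)
   have no decidable equality, hence [classic] below. *)
Definition flattens (f : I -> list A) (T : list A) : Prop :=
  exists support, NoDup support /\ (forall k, ~ In k support -> f k = []) /\
                  Permutation T (concat (map f support)).

Lemma flattens_update f f' j T :
  flattens f T -> (forall k, k <> j -> f' k = f k) ->
  exists T' C, flattens f' T' /\ Permutation T (f j ++ C) /\ Permutation T' (f' j ++ C).
Proof.
  intros (l & Hnd & Hout & HT) Hupd.
  assert (Hout' : forall l', (forall k, ~ In k l' -> ~ In k l /\ k <> j) ->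
                             forall k, ~ In k l' -> f' k = []).
  { intros l' Hl' k Hk. destruct (Hl' k Hk). rewrite Hupd by assumption. auto. }
  destruct (classic (In j l)) as [Hj | Hj].
  - destruct (in_split _ _ Hj) as (l1 & l2 & ->).
    assert (Hsame : forall l0, incl l0 (l1 ++ l2) -> map f' l0 = map f l0).
    { intros l0 Hl0. apply map_ext_in. intros k Hk. apply Hupd. intros ->.
      exact (NoDup_remove_2 _ _ _ Hnd (Hl0 _ Hk)). }
    exists (concat (map f' (l1 ++ j :: l2))), (concat (map f (l1 ++ l2))).
    split; [|split].
    + exists (l1 ++ j :: l2). split; [exact Hnd | split; [|reflexivity]].
      apply Hout'. intros k Hk. split; [exact Hk|]. intros ->. apply Hk, in_elt.
    + rewrite HT, !map_app, !concat_app. apply Permutation_app_swap_app.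
    + rewrite !map_app, !concat_app; simpl; rewrite (Hsame l1), (Hsame l2)
        by (intros k Hk; apply in_or_app; auto).
      apply Permutation_app_swap_app.
  - exists (concat (map f' (j :: l))), (concat (map f l)). split; [|split].
    + exists (j :: l). split; [constructor; assumption | split; [|reflexivity]].
      apply Hout'. intros k Hk. split; intro; apply Hk; simpl; auto.
    + rewrite (Hout j Hj). exact HT.
    + simpl. rewrite (map_ext_in f' f l); [reflexivity|].
      intros k Hk. apply Hupd. intros ->. contradiction.
Qed.

End Flatten.

Section Terms.
Context {Fn N : Type}.
Notation tm := (term Fn N).

Fixpoint term_ind_nested (P : tm -> Prop) (HV : forall v, P (TVar v))
  (HN : forall n, P (TName n)) (HA : forall f ts, Forall P ts -> P (TApp f ts))
  (t : tm) {struct t} : P t :=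
  match t with
  | TVar v => HV v
  | TName n => HN n
  | TApp f ts =>
      HA f ts ((fix go (l : list tm) : Forall P l :=
                  match l with
                  | [] => Forall_nil _
                  | u :: l' => Forall_cons u (term_ind_nested P HV HN HA u) (go l')
                  end) ts)
  end.

Lemma tsubst_comp (th s : var -> tm) t :
  tsubst th (tsubst s t) = tsubst (fun w => tsubst th (s w)) t.
Proof.
  induction t as [| |f ts IH] using term_ind_nested; simpl; auto.
  f_equal. rewrite map_map. apply map_ext_in. intros u Hu.
  exact (proj1 (Forall_forall _ _) IH u Hu).
Qed.

Lemma ground_tsubst (th : var -> tm) t : ground_inst th -> ground (tsubst th t).
Proof.
  intros Hth. induction t as [| |f ts IH] using term_ind_nested; simpl.
  - apply Hth.
  - reflexivity.
  - unfold ground. simpl. induction IH as [|u ts Hu _ IHts]; simpl; [reflexivity|].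
    unfold ground in Hu. rewrite Hu. exact IHts.
Qed.

Lemma tvars_map_TVar (vs : list var) : flat_map (@tvars Fn N) (map TVar vs) = vs.
Proof. induction vs; simpl; f_equal; auto. Qed.

Variable E : tm -> tm -> Prop.

Lemma tsubst_eqE_agree (th1 th2 : var -> tm) t :
  (forall v, In v (tvars t) -> eqE E (th1 v) (th2 v)) ->
  eqE E (tsubst th1 t) (tsubst th2 t).
Proof.
  induction t as [v|n|f ts IH] using term_ind_nested; simpl; intros Hagree.
  - apply Hagree. left. reflexivity.
  - apply eqE_refl.
  - apply eqE_cong, Forall2_map_sameP. intros u Hu.
    apply (proj1 (Forall_forall _ _) IH u Hu). intros v Hv.
    apply Hagree, in_flat_map. eauto.
Qed.

Section Facts.
Context {X : Type}.
Notation fct := (fact Fn N X).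
Notation feqs := (Forall2 (fun f g : fct => feqE E f g)).

Lemma feqE_sym (f g : fct) : feqE E f g -> feqE E g f.
Proof.
  intros [Hs Ha]. split; [congruence|].
  refine (Forall2_impl _ _ (Forall2_flip Ha)). intros t u. apply eqE_sym.
Qed.

Lemma feqE_trans (f g h : fct) : feqE E f g -> feqE E g h -> feqE E f h.
Proof.
  intros [Hs1 Ha1] [Hs2 Ha2]. split; [congruence|].
  exact (Forall2_trans (@eqE_trans _ _ E) Ha1 Ha2).
Qed.

Lemma feqs_fsym (a b : list fct) : feqs a b -> fsyms a = fsyms b.
Proof. induction 1 as [|f g a b [Hs _] _ IH]; simpl; congruence. Qed.

Lemma fsubst_comp (th s : var -> tm) (f : fct) :
  fsubst th (fsubst s f) = fsubst (fun w => tsubst th (s w)) f.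
Proof.
  destruct f as [F args]. unfold fsubst; simpl. f_equal.
  rewrite map_map. apply map_ext. intros t. apply tsubst_comp.
Qed.

Lemma fsubst_eqE_agree (th1 th2 : var -> tm) (f : fct) :
  (forall v, In v (fvars f) -> eqE E (th1 v) (th2 v)) ->
  feqE E (fsubst th1 f) (fsubst th2 f).
Proof.
  intros Hagree. split; [reflexivity|]. apply Forall2_map_sameP. intros t Ht.
  apply tsubst_eqE_agree. intros v Hv. apply Hagree, in_flat_map. eauto.
Qed.

Definition rule_instance (rho : rule Fn N X) (th : var -> tm) (l a r : list fct) : Prop :=
  ground_inst th /\
  Forall (@fground _ _ _) l /\ Forall (@fground _ _ _) a /\ Forall (@fground _ _ _) r /\
  feqs l (map (fsubst th) (prem rho)) /\
  feqs a (map (fsubst th) (lab rho)) /\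
  feqs r (map (fsubst th) (concl rho)).

Definition fires (Rs : rule Fn N X -> Prop) (l a r : list fct) : Prop :=
  exists rho th, Rs rho /\ rule_instance rho th l a r.

Lemma rule_instance_lab_fsym rho th l a r :
  rule_instance rho th l a r -> fsyms a = fsyms (lab rho).
Proof.
  intros (_ & _ & _ & _ & _ & Ha & _). rewrite (feqs_fsym _ _ Ha), map_map. reflexivity.
Qed.

Lemma rule_instance_rsubst (s : var -> tm) rho th l a r :
  rule_instance (rsubst s rho) th l a r ->
  rule_instance rho (fun w => tsubst th (s w)) l a r.
Proof.
  intros (Hth & Gl & Ga & Gr & Hl & Ha & Hr). simpl in Hl, Ha, Hr.
  rewrite map_map in Hl, Ha, Hr.
  setoid_rewrite fsubst_comp in Hl. setoid_rewrite fsubst_comp in Ha.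
  setoid_rewrite fsubst_comp in Hr.
  repeat split; auto. intros v. apply ground_tsubst, Hth.
Qed.

(* Matching the two labels only makes the instantiations agree on variables that
   are bare arguments of the label: [=_E] need not be injective on compound terms. *)
Definition lab_exposes_vars (rho : rule Fn N X) : Prop :=
  forall v, In v (flat_map (@fvars _ _ X) (prem rho ++ concl rho)) ->
    exists g, In g (lab rho) /\ In (TVar v) (fargs g).

Lemma lab_exposes_vars_intro rho (s : X) (vs : list var) :
  lab rho = [mkfact s (map TVar vs)] ->
  incl (flat_map (@fvars _ _ X) (prem rho ++ concl rho)) vs ->
  lab_exposes_vars rho.
Proof.
  intros Hlab Hvs v Hv. exists (mkfact s (map TVar vs)).
  rewrite Hlab. split; [left; reflexivity | apply in_map, Hvs, Hv].
Qed.

Lemma rule_instance_merge rho1 rho2 th1 th2 l1 r1 l2 r2 a :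
  lab rho1 = lab rho2 -> lab_exposes_vars rho1 ->
  rule_instance rho1 th1 l1 a r1 -> rule_instance rho2 th2 l2 a r2 ->
  rule_instance (mkrule (prem rho1 ++ prem rho2) [] (concl rho1 ++ concl rho2))
                th2 (l1 ++ l2) [] (r1 ++ r2).
Proof.
  intros Hlab Hexp (_ & Gl1 & _ & Gr1 & Hl1 & Ha1 & Hr1) (Hth2 & Gl2 & _ & Gr2 & Hl2 & Ha2 & Hr2).
  assert (Hagree : forall v, In v (flat_map (@fvars _ _ X) (prem rho1 ++ concl rho1)) ->
                             eqE E (th1 v) (th2 v)).
  { intros v Hv. destruct (Hexp v Hv) as (g & Hg & Hvg).
    rewrite <- Hlab in Ha2.
    assert (Hlabs : feqs (map (fsubst th1) (lab rho1)) (map (fsubst th2) (lab rho1))).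
    { refine (Forall2_trans (@feqE_trans) _ Ha2).
      refine (Forall2_impl _ _ (Forall2_flip Ha1)). intros f0 g0. apply feqE_sym. }
    destruct (proj1 Forall2_map_sameP Hlabs g Hg) as [_ Hargs].
    exact (proj1 Forall2_map_sameP Hargs (TVar v) Hvg). }
  assert (Hmove : forall L, incl L (prem rho1 ++ concl rho1) ->
                            feqs (map (fsubst th1) L) (map (fsubst th2) L)).
  { intros L HL. apply Forall2_map_sameP. intros f Hf.
    apply fsubst_eqE_agree. intros v Hv. apply Hagree, in_flat_map. eauto. }
  repeat split; simpl; try apply Forall_app; auto; rewrite map_app; apply Forall2_app; auto.
  - refine (Forall2_trans (@feqE_trans) Hl1 (Hmove _ _)). apply incl_appl, incl_refl.
  - refine (Forall2_trans (@feqE_trans) Hr1 (Hmove _ _)). apply incl_appr, incl_refl.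
Qed.

Variable pers : X -> bool.

Definition rewrites (S l r S' : list fct) : Prop :=
  (exists rest, Permutation S (filter (fun f => negb (pers (fsym f))) l ++ rest) /\
                Permutation S' (rest ++ r)) /\
  (forall f, In f l -> pers (fsym f) = true -> In f S).

Lemma msr_stepP Rs S a S' :
  msr_step E pers Rs S a S' <-> exists l r, fires Rs l a r /\ rewrites S l r S'.
Proof.
  split.
  - intros (rho & th & l & r & HR & Hth & Gl & Ga & Gr & Hl & Ha & Hr & Hrest & Hpers).
    exists l, r. split; [exists rho, th; repeat split|split]; auto.
  - intros (l & r & (rho & th & HR & Hth & Gl & Ga & Gr & Hl & Ha & Hr) & Hrest & Hpers).
    exists rho, th, l, r. repeat split; auto.
Qed.

Lemma rewrites_nil S : rewrites S [] [] S.
Proof. split; [exists S; rewrite app_nil_r; split; reflexivity | contradiction]. Qed.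

Lemma rewrites_perm S T l r S' T' :
  Permutation S T -> Permutation S' T' -> rewrites S l r S' -> rewrites T l r T'.
Proof.
  intros HST HST' ((rest & H1 & H2) & Hpers). split.
  - exists rest. rewrite <- HST, <- HST'. split; assumption.
  - intros f Hf Hp. apply (Permutation_in _ HST), Hpers; assumption.
Qed.

Lemma rewrites_app S1 l1 r1 S1' S2 l2 r2 S2' :
  rewrites S1 l1 r1 S1' -> rewrites S2 l2 r2 S2' ->
  rewrites (S1 ++ S2) (l1 ++ l2) (r1 ++ r2) (S1' ++ S2').
Proof.
  intros ((rest1 & H11 & H12) & Hp1) ((rest2 & H21 & H22) & Hp2). split.
  - exists (rest1 ++ rest2). rewrite filter_app, H11, H21, H12, H22.
    split; rewrite <- !app_assoc; apply Permutation_app_head, Permutation_app_swap_app.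
  - intros f Hf Hp. apply in_or_app.
    destruct (in_app_or _ _ _ Hf); [left; apply Hp1 | right; apply Hp2]; assumption.
Qed.

Lemma rewrites_component {I} (f f' : I -> list fct) j T l r :
  flattens f T -> (forall k, k <> j -> f' k = f k) -> rewrites (f j) l r (f' j) ->
  exists T', flattens f' T' /\ rewrites T l r T'.
Proof.
  intros HT Hupd Hj.
  destruct (flattens_update f f' j T HT Hupd) as (T' & C & HT' & HC & HC').
  exists T'. split; [exact HT'|].
  apply (rewrites_perm (f j ++ C) T l r (f' j ++ C) T'); [symmetry; assumption .. |].
  rewrite <- (app_nil_r l), <- (app_nil_r r). apply rewrites_app; [exact Hj | apply rewrites_nil].
Qed.

End Facts.
End Terms.

Section Simulation.
Variable Sg : Sig.
Variables (R_env : brule Sg -> Prop) (R_role : nat -> brule Sg -> Prop).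
Hypothesis Hformat : format R_env R_role.

Notation E := (Eqs Sg).
Notation intf_fires := (fires E (R_intf R_env R_role)).

Definition thread_rules (i : nat) (rho : xrule Sg) : Prop :=
  exists v, R_role_full R_env R_role i (rho, v).

Lemma setup_rule_shape i r0 :
  setup_rule R_env i r0 ->
  lab r0 = [] /\ exists v u, concl r0 = [mkfact (fSetup Sg i) (TVar v :: u)].
Proof.
  intros (Hi & Henv & Hsetup).
  destruct Hformat as (_&_&_&_&_&_&_&_&_&_&_&_&_&_&_&_&_&_&_&_&Hset&_).
  destruct (Hset r0 i Henv Hi Hsetup) as (Hlab & v & u & _ & Hconcl). eauto.
Qed.

Lemma thread_fires_of_rid i n l a r :
  fires E (R_role_rid R_env R_role i n) l a r -> fires E (thread_rules i) l a r.
Proof.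
  intros (rho & th & (rho0 & v & Hrole & ->) & Hinst).
  eexists rho0, _. split; [exists v; exact Hrole | exact (rule_instance_rsubst _ _ _ _ _ _ _ Hinst)].
Qed.

Lemma io_role_lab_LambdaE i rho v th a :
  R_io_role R_env i (rho, v) -> ground_inst th ->
  Forall2 (fun f g => feqE E f g) a (map (fsubst th) (lab rho)) -> LambdaE R_env a.
Proof.
  intros Hio Hth Ha.
  exists (map (fsubst th) (lab rho)). split; [exists i, (rho, v), th; auto | exists a; auto].
Qed.

Lemma io_env_lab_of_role rho :
  R_io_env R_env rho -> exists i rho' v, R_io_role R_env i (rho', v) /\ lab rho' = lab rho.
Proof.
  intros (i & Hi & [(F & HF & ->) | [(G & HG & ->) | (r0 & Hsetup & ->)]]).
  - exists i, (mkrule [] [lamIn Sg i F] [mkfact (XBuf Sg F i) (rid_t Sg :: xs Sg (farity Sg F))]), ridv.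
    split; [split; [exact Hi | left; exists F; auto] | reflexivity].
  - exists i, (mkrule [mkfact (XBuf Sg G i) (rid_t Sg :: xs Sg (farity Sg G))] [lamOut Sg i G] []), ridv.
    split; [split; [exact Hi | right; left; exists G; auto] | reflexivity].
  - destruct (setup_rule_shape _ _ Hsetup) as (_ & v & u & Hconcl).
    exists i, (mkrule [] [lamSet i r0] (map (@lift Sg) (concl r0))), v.
    split; [split; [exact Hi | right; right; exists r0, u; auto] | reflexivity].
Qed.

Lemma LambdaE_has_sync a : LambdaE R_env a -> exists s, In (XSync s) (fsyms a).
Proof.
  intros (b & (i & (rho, v) & th & Hio & _ & ->) & (a2 & Hperm & Ha2)). simpl in Ha2.
  assert (Hlab : exists s args, lab rho = [mkfact (XSync s) args]).
  { destruct Hio as (_ & [(? & _ & _ & Hr) | [(? & _ & _ & Hr) | (? & ? & _ & _ & Hr)]]);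
      simpl in Hr; rewrite Hr; do 2 eexists; reflexivity. }
  destruct Hlab as (s & args & Hlab). exists s.
  apply (Permutation_in _ (Permutation_map _ (Permutation_sym Hperm))).
  rewrite (feqs_fsym _ _ _ Ha2), Hlab. left. reflexivity.
Qed.

Lemma lifted_instance_not_LambdaE rho th l a r L :
  lab rho = map (@lift Sg) L -> rule_instance E rho th l a r -> ~ LambdaE R_env a.
Proof.
  intros Hlab Hinst HL. destruct (LambdaE_has_sync a HL) as (s & Hs).
  rewrite (rule_instance_lab_fsym _ _ _ _ _ _ Hinst), Hlab, map_map in Hs.
  apply in_map_iff in Hs as (f & Hf & _). discriminate Hf.
Qed.

Lemma io_parts_recombine i rho1 v rho2 :
  R_io_role R_env i (rho1, v) -> R_io_env R_env rho2 ->
  fsyms (lab rho1) = fsyms (lab rho2) ->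
  lab rho1 = lab rho2 /\ lab_exposes_vars rho1 /\
  R_intf R_env R_role (mkrule (prem rho1 ++ prem rho2) [] (concl rho1 ++ concl rho2)).
Proof.
  intros (Hi & Hrole) (i' & _ & Henv) Hsym.
  destruct Hrole as [(F & HF & _ & Hr) | [(G & HG & _ & Hr) | (r0 & _ & Hsetup & _ & Hr)]];
    simpl in Hr; subst rho1;
    destruct Henv as [(F' & _ & ->) | [(G' & _ & ->) | (r0' & _ & ->)]];
    simpl in Hsym; try discriminate Hsym; injection Hsym; intros; subst.
  - split; [reflexivity | split].
    + apply lab_exposes_vars_intro with (XSync (SIn Sg i' F')) (ridv :: xsv (farity Sg F'));
        [reflexivity|].
      simpl. unfold fvars, xs. simpl. rewrite tvars_map_TVar, app_nil_r. apply incl_refl.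
    + right; left. exists i'. split; [assumption | left; exists F'; auto].
  - split; [reflexivity | split].
    + apply lab_exposes_vars_intro with (XSync (SOut Sg i' G')) (ridv :: xsv (farity Sg G'));
        [reflexivity|].
      simpl. unfold fvars, xs. simpl. rewrite tvars_map_TVar, app_nil_r. apply incl_refl.
    + right; left. exists i'. split; [assumption | right; left; exists G'; auto].
  - split; [reflexivity | split].
    + apply lab_exposes_vars_intro with (XSync (SSet i' r0')) (rule_vars r0'); [reflexivity|].
      intros w Hw. simpl in Hw. apply in_flat_map in Hw as (f & Hf & Hw).
      apply in_map_iff in Hf as (f0 & <- & Hf0).
      apply nodup_In, in_flat_map. exists f0. split; [|exact Hw].
      apply in_or_app; right; apply in_or_app; right; exact Hf0.
    + right; left. exists i'. split; [assumption | right; right; exists r0'; split; [assumption|]].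
      destruct (setup_rule_shape _ _ Hsetup) as (Hlab & _).
      unfold lift_rule. simpl. rewrite Hlab, app_nil_r. reflexivity.
Qed.

Lemma thread_fires_nonsync i l a r :
  i < nroles Sg -> fires E (thread_rules i) l a r -> ~ LambdaE R_env a -> intf_fires l a r.
Proof.
  intros Hi (rho & th & (v & [Hrole | Hio]) & Hinst) HnL.
  - exists rho, th. split; [right; right; exists i, v; auto | exact Hinst].
  - destruct Hinst as (Hth & _ & _ & _ & _ & Ha & _).
    exfalso. exact (HnL (io_role_lab_LambdaE _ _ _ _ _ Hio Hth Ha)).
Qed.

Lemma env_fires_nonsync l a r :
  fires E (R_env_e R_env) l a r -> ~ LambdaE R_env a -> intf_fires l a r.
Proof.
  intros (rho & th & [(r0 & Hr0 & ->) | Hio] & Hinst) HnL.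
  - exists (lift_rule r0), th. split; [left; eauto | exact Hinst].
  - destruct Hinst as (Hth & _ & _ & _ & _ & Ha & _).
    destruct (io_env_lab_of_role _ Hio) as (i & rho' & v & Hio' & Hlab).
    rewrite <- Hlab in Ha. exfalso. exact (HnL (io_role_lab_LambdaE _ _ _ _ _ Hio' Hth Ha)).
Qed.

Lemma fires_sync i l1 r1 l2 r2 a :
  fires E (thread_rules i) l1 a r1 -> fires E (R_env_e R_env) l2 a r2 -> LambdaE R_env a ->
  intf_fires (l1 ++ l2) [] (r1 ++ r2).
Proof.
  intros (rho1 & th1 & (v & Hrole) & Hinst1) (rho2 & th2 & Henv & Hinst2) HL.
  destruct Hrole as [(r & _ & _ & _ & Hlab & _) | Hio1].
  { exfalso. exact (lifted_instance_not_LambdaE _ _ _ _ _ _ Hlab Hinst1 HL). }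
  destruct Henv as [(r0 & _ & ->) | Hio2].
  { exfalso. exact (lifted_instance_not_LambdaE (lift_rule r0) _ _ _ _ (lab r0) eq_refl Hinst2 HL). }
  assert (Hsym : fsyms (lab rho1) = fsyms (lab rho2)).
  { rewrite <- (rule_instance_lab_fsym _ _ _ _ _ _ Hinst1).
    exact (rule_instance_lab_fsym _ _ _ _ _ _ Hinst2). }
  destruct (io_parts_recombine _ _ _ _ Hio1 Hio2 Hsym) as (Hlab & Hexp & Hintf).
  exists (mkrule (prem rho1 ++ prem rho2) [] (concl rho1 ++ concl rho2)), th2.
  split; [exact Hintf | eapply rule_instance_merge; eassumption].
Qed.

Definition simulates (s : lst (composed R_env R_role)) (S : list (xfact Sg)) : Prop :=
  exists T, flattens (fst s) T /\ Permutation S (T ++ snd s).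

Lemma composed_step_simulated s a s' S :
  simulates s S -> lstep (composed R_env R_role) s a s' ->
  exists S', msr_step E (@xpers Sg) (R_intf R_env R_role) S a S' /\ simulates s' S'.
Proof.
  intros (T & HT & HS) Hstep. destruct s as [f e], s' as [f' e']. simpl in *.
  destruct Hstep as [(-> & a' & HL & (j & _ & Hj & Hupd) & He)
                    | [(HnL & (j & Pj & Hj & Hupd) & ->) | (HnL & He & ->)]].
  - apply msr_stepP in Hj as (l1 & r1 & Hf1 & Hw1). apply msr_stepP in He as (l2 & r2 & Hf2 & Hw2).
    destruct (rewrites_component _ f f' j T l1 r1 HT Hupd Hw1) as (T' & HT' & HwT).
    exists (T' ++ e'). split; [apply msr_stepP; exists (l1 ++ l2), (r1 ++ r2); split | exists T'; auto].
    + exact (fires_sync _ _ _ _ _ _ (thread_fires_of_rid _ _ _ _ _ Hf1) Hf2 HL).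
    + eapply rewrites_perm; [symmetry; exact HS | reflexivity | apply rewrites_app; assumption].
  - apply msr_stepP in Hj as (l & r & Hf & Hw).
    destruct (rewrites_component _ f f' j T l r HT Hupd Hw) as (T' & HT' & HwT).
    exists (T' ++ e). split; [apply msr_stepP; exists l, r; split | exists T'; auto].
    + exact (thread_fires_nonsync _ _ _ _ (proj1 Pj) (thread_fires_of_rid _ _ _ _ _ Hf) HnL).
    + eapply rewrites_perm; [symmetry; exact HS | reflexivity |].
      rewrite <- (app_nil_r l), <- (app_nil_r r). apply rewrites_app; [exact HwT | apply rewrites_nil].
  - apply msr_stepP in He as (l & r & Hf & Hw).
    exists (T ++ e'). split; [apply msr_stepP; exists l, r; split | exists T; auto].
    + exact (env_fires_nonsync _ _ _ Hf HnL).
    + eapply rewrites_perm; [symmetry; exact HS | reflexivity |].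
      apply (rewrites_app _ _ [] [] _ _ _ _ _ (rewrites_nil _ T) Hw).
Qed.

Lemma composed_exec_simulated tr s :
  exec (composed R_env R_role) tr s -> exists S, exec (intf R_env R_role) tr S /\ simulates s S.
Proof.
  induction 1 as [|tr s a s' _ (S & HS & Hsim) Hstep].
  - exists []. split; [constructor|]. exists []. split; [|reflexivity].
    exists []. split; [constructor | split; [reflexivity | reflexivity]].
  - destruct (composed_step_simulated _ _ _ _ Hsim Hstep) as (S' & HS' & Hsim').
    exists S'. split; [econstructor; eauto | exact Hsim'].
Qed.

End Simulation.

Theorem lemma2 (Sg : Sig) (R_env : brule Sg -> Prop) (R_role : nat -> brule Sg -> Prop) :
  format R_env R_role ->
  forall tr, Tr (composed R_env R_role) tr ->
  exists tr', Tr (intf R_env R_role) tr' /\ Forall2 (@Permutation (xfact Sg)) tr tr'.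
Proof.
  intros Hformat tr (s & Hexec).
  destruct (composed_exec_simulated Sg R_env R_role Hformat tr s Hexec) as (S & HS & _).
  exists tr. split; [exists S; exact HS|].
  clear Hexec HS. induction tr; constructor; [reflexivity | assumption].
Qed.
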